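(* The Pansiot pre-antipalindromes of length $3$ are exactly $001$, $011$, $100$, and $110$. Moreover, for every integer $n\geq 1$: (i) the Pansiot pre-antipalindromes of length $4n+1$ are precisely the words of the form $0u0$ or $1u1$, where $u$ is a Pansiot pre-antipalindrome of length $4n-1$; (ii) the Pansiot pre-antipalindromes of length $4n+3$ are precisely the words of the form $0u1$ or $1u0$, where $u$ is a Pansiot pre-antipalindrome of length $4n+1$.
   Context: Words are over the binary alphabet $\{0,1\}$, with letters also read as the integers $0$ and $1$. For a nonempty binary word $u=u_1u_2\cdots u_n$, its Pansiot coding is the binary word $c_1c_2\cdots c_{n-1}$ of length $n-1$ with $c_i=|u_i-u_{i+1}|$ (equivalently $c_i=u_i+u_{i+1}\bmod 2$). A binary word $x=x_1\cdots x_m$ is an anti-palindrome if $x_i\neq x_{m+1-i}$ for every $i\in\{1,\ldots,m\}$. A binary word is a Pansiot pre-antipalindrome if its Pansiot coding is an anti-palindrome. *)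

From mathcomp Require Import all_boot.
Set Implicit Arguments. Unset Strict Implicit. Unset Printing Implicit Defensive.

(* Binary words: seq bool, with false = letter 0 and true = letter 1. *)

Definition pansiot (u : seq bool) : seq bool :=
  [seq (p.1 != p.2) | p <- zip u (behead u)].

(* x is an anti-palindrome: x_i <> x_{m+1-i} for every i (0-indexed here). *)
Definition antipalindrome (x : seq bool) : Prop :=
  forall i, i < size x -> nth false x i != nth false x (size x - 1 - i).

Definition pansiot_pre_antipalindrome (u : seq bool) : Prop :=
  antipalindrome (pansiot u).

(* Write w = a u b.  The Pansiot coding of w is (a != u_1) c (u_last != b),
   where c is the coding of u, so w is a pre-antipalindrome iff u is one and
   the two outer letters of the coding are complementary.  An anti-palindrome
   of length 2k contains exactly k ones, and the number of ones in a Pansiot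
   coding has the parity of (u_1 != u_last); hence for a pre-antipalindrome u
   of length 2k+1 we know whether u_1 = u_last, and the outer condition
   becomes (a == b) = odd k.  Lengths 4n-1 and 4n+1 give k odd and k even. *)
From mathcomp Require Import all_boot zify.

Set Implicit Arguments.
Unset Strict Implicit.
Unset Printing Implicit Defensive.

Lemma antipalindromeE x : antipalindrome x <-> map negb (rev x) = x.
Proof.
have rev_index i : i < size x -> size x - i.+1 = size x - 1 - i by lia.
split=> [anti_x | negx_x i ltix].
  apply: (@eq_from_nth _ false); rewrite ?size_map ?size_rev // => i ltix.
  rewrite (nth_map false) ?size_rev // nth_rev // rev_index //.
  by move: (anti_x i ltix); case: (nth _ x i); case: (nth _ x _).
rewrite -{1}negx_x (nth_map false) ?size_rev // nth_rev // rev_index //.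
by case: (nth _ x _).
Qed.

Lemma antipalindrome_cons_rcons x q y :
  antipalindrome (x :: rcons q y) <-> y = ~~ x /\ antipalindrome q.
Proof.
rewrite !antipalindromeE rev_cons rev_rcons /= map_rcons.
split=> [[<-] /eqP | [-> ->]]; last by rewrite negbK.
by rewrite eqseq_rcons => /andP[/eqP -> /eqP ->].
Qed.

Lemma count_antipalindrome k p :
  size p = k.*2 -> antipalindrome p -> count id p = k.
Proof.
elim: k p => [|k IHk] p; first by case: p.
case: p => // x s; case/lastP: s => [|q y] //.
rewrite /= size_rcons doubleS => -[size_q].
case/antipalindrome_cons_rcons => -> anti_q.
rewrite -cats1 count_cat (IHk q size_q anti_q) /=.
by case: x; rewrite /= ?addn0 ?addn1.
Qed.

Lemma pansiot_rcons x s y :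
  pansiot (rcons (x :: s) y) = rcons (pansiot (x :: s)) (last x s != y).
Proof. by elim: s x => [|z s IHs] x //=; rewrite -IHs. Qed.

Lemma size_pansiot s : size (pansiot s) = (size s).-1.
Proof. by rewrite size_map size_zip size_behead minnE subKn ?leq_pred. Qed.

Lemma odd_count_pansiot x s : odd (count id (pansiot (x :: s))) = (x != last x s).
Proof.
elim: s x => [|z s IHs] x /=; first by rewrite eqxx.
by rewrite oddD IHs; case: (last z s); case: x; case: z.
Qed.

Lemma pre_antipalindrome_ends k z v :
  size (z :: v) = k.*2.+1 -> pansiot_pre_antipalindrome (z :: v) ->
  (z != last z v) = odd k.
Proof.
move=> size_zv pre_zv.
have size_code : size (pansiot (z :: v)) = k.*2 by rewrite size_pansiot size_zv.
by rewrite -odd_count_pansiot (count_antipalindrome size_code pre_zv).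
Qed.

Lemma pre_antipalindrome_cons_rcons k a u b : size u = k.*2.+1 ->
  pansiot_pre_antipalindrome (a :: rcons u b) <->
  pansiot_pre_antipalindrome u /\ (a == b) = odd k.
Proof.
case: u => // z v size_u.
have outer_letters : (last z v != b) = ~~ (a != z) <-> (a == b) = (z != last z v).
  by split=> /eqP; case: (last z v); case: (z); case: a; case: b.
have code_w : pansiot (a :: rcons (z :: v) b) =
              (a != z) :: rcons (pansiot (z :: v)) (last z v != b).
  by rewrite -pansiot_rcons.
rewrite /pansiot_pre_antipalindrome code_w antipalindrome_cons_rcons.
have ends := pre_antipalindrome_ends size_u.
split=> [[outer pre_u] | [pre_u outer]]; split=> //.
  by rewrite -(ends pre_u); apply/outer_letters.
by apply/outer_letters; rewrite (ends pre_u).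
Qed.

Lemma pre_antipalindrome_extend k w : size w = k.*2.+3 ->
  pansiot_pre_antipalindrome w <->
  exists u : seq bool, size u = k.*2.+1 /\ pansiot_pre_antipalindrome u /\
    (w = false :: rcons u (~~ odd k) \/ w = true :: rcons u (odd k)).
Proof.
move=> size_w; split=> [pre_w | [u [size_u [pre_u w_eq]]]].
  case: w size_w pre_w => [|a s] //; case/lastP: s => [|u b] //.
  rewrite /= size_rcons => -[size_u].
  case/(pre_antipalindrome_cons_rcons _ _ size_u) => pre_u ab.
  by exists u; do 2!split=> //; case: a b ab => -[] /= <-; auto.
by case: w_eq => ->; apply/(pre_antipalindrome_cons_rcons _ _ size_u); case: (odd k).
Qed.

Theorem mainTheorem2 :
  (forall w : seq bool, size w = 3 ->
     (pansiot_pre_antipalindrome w <->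
        w = [:: false; false; true] \/ w = [:: false; true; true] \/
        w = [:: true; false; false] \/ w = [:: true; true; false]))
  /\
  (forall n : nat, 1 <= n ->
     (forall w : seq bool, size w = 4 * n + 1 ->
        (pansiot_pre_antipalindrome w <->
           exists u : seq bool, size u = 4 * n - 1 /\ pansiot_pre_antipalindrome u /\
             (w = false :: rcons u false \/ w = true :: rcons u true)))
     /\
     (forall w : seq bool, size w = 4 * n + 3 ->
        (pansiot_pre_antipalindrome w <->
           exists u : seq bool, size u = 4 * n + 1 /\ pansiot_pre_antipalindrome u /\
             (w = false :: rcons u true \/ w = true :: rcons u false)))).
Proof.
split.
  case=> [|a [|z [|b []]]] // _.
  rewrite (@pre_antipalindrome_cons_rcons 0 a [:: z] b) //.
  split=> [[_] | eqs]; last by split=> //; case: eqs => [|[|[|]]] [-> _ ->].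
  by case: a; case: b => //= _; case: z; auto.
move=> n n_gt0; split=> w size_w.
- have -> : 4 * n - 1 = (n.-1.*2.+1).*2.+1 by lia.
  by rewrite (@pre_antipalindrome_extend n.-1.*2.+1) /= ?odd_double //; lia.
- have -> : 4 * n + 1 = n.*2.*2.+1 by lia.
  by rewrite (@pre_antipalindrome_extend n.*2) ?odd_double //; lia.
Qed.
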